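(* A residuated lattice $L$ is a BL-algebra if and only if for all $x,y,z\in L$, $$[x\odot(x\rightarrow y)]\rightarrow z=(x\rightarrow z)\vee(y\rightarrow z).$$
   Context: A (commutative) residuated lattice is an algebra $(L,\wedge,\vee,\odot,\rightarrow,0,1)$ such that $(L,\wedge,\vee,0,1)$ is a bounded lattice, $(L,\odot,1)$ is a commutative ordered monoid, and $z\leq x\rightarrow y$ iff $x\odot z\leq y$ for all $x,y,z\in L$. A BL-algebra is a residuated lattice satisfying prelinearity $(x\rightarrow y)\vee(y\rightarrow x)=1$ and divisibility $x\odot(x\rightarrow y)=x\wedge y$ for all $x,y$. *)

From Stdlib Require Import Setoid.

(* A (commutative) residuated lattice (L, meet, join, mul, imp, 0, 1):
   - (L, meet, join, 0, 1) is a bounded lattice (given by the usual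
     equational axioms; the order is x <= y :<-> meet x y = x),
   - (L, mul, 1) is a commutative monoid, ordered (mul monotone),
   - residuation: z <= x -> y  iff  mul x z <= y. *)
Record ResLattice := {
  carrier :> Type;
  meet : carrier -> carrier -> carrier;
  join : carrier -> carrier -> carrier;
  mul  : carrier -> carrier -> carrier;
  imp  : carrier -> carrier -> carrier;
  bot  : carrier;
  top  : carrier;
  meetC : forall x y, meet x y = meet y x;
  joinC : forall x y, join x y = join y x;
  meetA : forall x y z, meet x (meet y z) = meet (meet x y) z;
  joinA : forall x y z, join x (join y z) = join (join x y) z;
  meet_absorb : forall x y, meet x (join x y) = x;
  join_absorb : forall x y, join x (meet x y) = x;
  meet_bot : forall x, meet bot x = bot;
  meet_top : forall x, meet top x = x;
  mulC : forall x y, mul x y = mul y x;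
  mulA : forall x y z, mul x (mul y z) = mul (mul x y) z;
  mul1 : forall x, mul x top = x;
  mul_mono : forall x y z, meet x y = x -> meet (mul x z) (mul y z) = mul x z;
  residuation : forall x y z,
      meet z (imp x y) = z <-> meet (mul x z) y = mul x z
}.

Arguments meet {r}. Arguments join {r}. Arguments mul {r}. Arguments imp {r}.
Arguments bot {r}. Arguments top {r}.

Definition rle {L : ResLattice} (x y : L) : Prop := meet x y = x.

Definition is_BL (L : ResLattice) : Prop :=
  (forall x y : L, join (imp x y) (imp y x) = top) /\
  (forall x y : L, mul x (imp x y) = meet x y).


(* Only the identity (x ∧ y) → z = (x → z) ∨ (y → z) is needed for the
   forward direction; it holds in every prelinear residuated lattice, because
   multiplying (x ∧ y) → z by 1 = (x → y) ∨ (y → x) splits it into two pieces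
   bounded by x → z and y → z.  Divisibility then turns x ⊙ (x → y) into x ∧ y.
   Conversely, taking z := x ⊙ (x → y) in the identity makes its left side 1,
   which forces x ∧ y ≤ x ⊙ (x → y), i.e. divisibility; taking z := x ∧ y then
   gives 1 = (x → x ∧ y) ∨ (y → x ∧ y) ≤ (x → y) ∨ (y → x). *)

Section ResLatticeTheory.

Context {L : ResLattice}.
Implicit Types x y z w : L.

Lemma meet_id x : meet x x = x.
Proof.
  pose proof (meet_absorb L x (meet x x)) as E.
  rewrite join_absorb in E. exact E.
Qed.

Lemma rle_refl x : rle x x.
Proof. apply meet_id. Qed.

Lemma rle_trans x y z : rle x y -> rle y z -> rle x z.
Proof.
  unfold rle; intros Hxy Hyz. rewrite <- Hxy, <- meetA, Hyz. reflexivity.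
Qed.

Lemma rle_antisym x y : rle x y -> rle y x -> x = y.
Proof.
  unfold rle; intros Hxy Hyx. rewrite <- Hxy, meetC. exact Hyx.
Qed.

Lemma rle_meetl x y : rle (meet x y) x.
Proof. unfold rle. rewrite (meetC _ x y), <- meetA, meet_id. reflexivity. Qed.

Lemma rle_meetr x y : rle (meet x y) y.
Proof. unfold rle. rewrite <- meetA, meet_id. reflexivity. Qed.

Lemma rle_meet x y z : rle z x -> rle z y -> rle z (meet x y).
Proof. unfold rle; intros Hx Hy. rewrite meetA, Hx, Hy. reflexivity. Qed.

Lemma rle_joinE x y : rle x y <-> join x y = y.
Proof.
  unfold rle; split; intro H.
  - rewrite <- H, (joinC _ _ y), meetC. apply join_absorb.
  - rewrite <- H. apply meet_absorb.
Qed.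

Lemma rle_joinl x y : rle x (join x y).
Proof. apply meet_absorb. Qed.

Lemma rle_joinr x y : rle y (join x y).
Proof. rewrite joinC. apply meet_absorb. Qed.

Lemma rle_join x y z : rle x z -> rle y z -> rle (join x y) z.
Proof.
  rewrite !rle_joinE; intros Hx Hy. rewrite <- joinA, Hy, Hx. reflexivity.
Qed.

Lemma rle_join2 x y z w : rle x z -> rle y w -> rle (join x y) (join z w).
Proof.
  intros Hxz Hyw. apply rle_join.
  - apply (rle_trans _ _ _ Hxz), rle_joinl.
  - apply (rle_trans _ _ _ Hyw), rle_joinr.
Qed.

Lemma rle_top x : rle x top.
Proof. unfold rle. rewrite meetC. apply meet_top. Qed.

Lemma rle_imp x y z : rle z (imp x y) <-> rle (mul x z) y.
Proof. apply residuation. Qed.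

Lemma rle_mul2r x y z : rle x y -> rle (mul x z) (mul y z).
Proof. apply mul_mono. Qed.

Lemma rle_mul2l x y z : rle x y -> rle (mul z x) (mul z y).
Proof. intro H. rewrite (mulC _ z x), (mulC _ z y). apply mul_mono, H. Qed.

Lemma rle_mulr x y : rle (mul x y) x.
Proof.
  apply (rle_trans _ (mul x top)).
  - apply rle_mul2l, rle_top.
  - rewrite mul1. apply rle_refl.
Qed.

Lemma mul_imp_le x y : rle (mul x (imp x y)) y.
Proof. apply rle_imp, rle_refl. Qed.

Lemma mul_imp_le_meet x y : rle (mul x (imp x y)) (meet x y).
Proof. apply rle_meet; [apply rle_mulr | apply mul_imp_le]. Qed.

Lemma mul_joinr x y z : mul x (join y z) = join (mul x y) (mul x z).
Proof.
  apply rle_antisym.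
  - apply rle_imp, rle_join; apply rle_imp; [apply rle_joinl | apply rle_joinr].
  - apply rle_join; apply rle_mul2l; [apply rle_joinl | apply rle_joinr].
Qed.

Lemma imp_le2l x y z : rle x y -> rle (imp y z) (imp x z).
Proof.
  intro H. apply rle_imp.
  apply (rle_trans _ (mul y (imp y z))); [apply rle_mul2r, H | apply mul_imp_le].
Qed.

Lemma imp_le2r x y z : rle y z -> rle (imp x y) (imp x z).
Proof. intro H. apply rle_imp, (rle_trans _ y); [apply mul_imp_le | exact H]. Qed.

Lemma imp_id x : imp x x = top.
Proof.
  apply rle_antisym; [apply rle_top |].
  apply rle_imp. rewrite mul1. apply rle_refl.
Qed.

Lemma join_imp_le_imp_meet x y z :
  rle (join (imp x z) (imp y z)) (imp (meet x y) z).
Proof. apply rle_join; apply imp_le2l; [apply rle_meetl | apply rle_meetr]. Qed.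

Lemma mul_meet_join_imp_le x y z :
  rle (mul (meet x y) (join (imp x z) (imp y z))) z.
Proof.
  rewrite mul_joinr. apply rle_join; apply rle_imp.
  - apply imp_le2l, rle_meetl.
  - apply imp_le2l, rle_meetr.
Qed.

Lemma mul_imp_meet_le x y w :
  rle (mul x (mul w (imp x y))) (mul w (meet x y)).
Proof.
  rewrite mulA, (mulC _ x w), <- mulA. apply rle_mul2l, mul_imp_le_meet.
Qed.

Lemma imp_meet_prelinear x y z :
  join (imp x y) (imp y x) = top ->
  imp (meet x y) z = join (imp x z) (imp y z).
Proof.
  intro Hpre. apply rle_antisym; [| apply join_imp_le_imp_meet].
  set (w := imp (meet x y) z).
  assert (Hw : rle (mul w (meet x y)) z) by (rewrite mulC; apply mul_imp_le).
  rewrite <- (mul1 L w), <- Hpre, mul_joinr.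
  apply rle_join2; apply rle_imp.
  - apply (rle_trans _ _ _ (mul_imp_meet_le x y w) Hw).
  - rewrite meetC in Hw. apply (rle_trans _ _ _ (mul_imp_meet_le y x w) Hw).
Qed.

End ResLatticeTheory.

Theorem theorem3p5 (L : ResLattice) :
  is_BL L <->
  (forall x y z : L,
      imp (mul x (imp x y)) z = join (imp x z) (imp y z)).
Proof.
  split.
  - intros [Hpre Hdiv] x y z. rewrite Hdiv. apply imp_meet_prelinear, Hpre.
  - intros H.
    assert (Hdiv : forall x y : L, mul x (imp x y) = meet x y).
    { intros x y. apply rle_antisym; [apply mul_imp_le_meet |].
      pose proof (H x y (mul x (imp x y))) as E. rewrite imp_id in E.
      rewrite <- (mul1 L (meet x y)), E. apply mul_meet_join_imp_le. }
    split; [| exact Hdiv].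
    intros x y. apply rle_antisym; [apply rle_top |].
    pose proof (H x y (meet x y)) as E. rewrite Hdiv, imp_id in E.
    rewrite E. apply rle_join2; apply imp_le2r; [apply rle_meetr | apply rle_meetl].
Qed.
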